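(* Let $1 \le R < P$ be integers and let $\mathcal{S}_{P,R}^+$ be the set of $P\times P$ real symmetric positive semi-definite matrices of rank exactly $R$, equipped with the topology induced from $\mathbb{R}^{P\times P}$. There is no distance (metric) $d : \mathcal{S}_{P,R}^+\times\mathcal{S}_{P,R}^+\to[0,\infty)$ that is continuous and satisfies the affine invariance property $$d(\bm{W}^{\top}\bm{S}\bm{W},\ \bm{W}^{\top}\bm{S}'\bm{W}) = d(\bm{S},\bm{S}')\quad\text{for all } \bm{S},\bm{S}'\in\mathcal{S}_{P,R}^+ \text{ and all invertible } \bm{W}\in\mathbb{R}^{P\times P}.$$
   Context: Note that for invertible $\bm{W}$ and $\bm{S}\in\mathcal{S}_{P,R}^+$, one has $\bm{W}^{\top}\bm{S}\bm{W}\in\mathcal{S}_{P,R}^+$, so the invariance condition is well posed. *)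

From HB Require Import structures.
From mathcomp Require Import all_boot all_order all_algebra.
Set Implicit Arguments. Unset Strict Implicit. Unset Printing Implicit Defensive.
Import Order.TTheory GRing.Theory Num.Theory.
Local Open Scope ring_scope.

Definition psd_rank (F : realFieldType) (P r : nat) (S : 'M[F]_P) : Prop :=
  S^T = S /\ (forall v : 'rV[F]_P, 0 <= (v *m S *m v^T) 0 0) /\ \rank S = r.

Definition is_metric_on (F : realFieldType) (P : nat) (A : 'M[F]_P -> Prop)
    (d : 'M[F]_P -> 'M[F]_P -> F) : Prop :=
  (forall S S', A S -> A S' -> 0 <= d S S') /\
  (forall S S', A S -> A S' -> (d S S' = 0 <-> S = S')) /\
  (forall S S', A S -> A S' -> d S S' = d S' S) /\
  (forall S S' S'', A S -> A S' -> A S'' -> d S S'' <= d S S' + d S' S'').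

(* Entrywise closeness: the (max-norm) topology induced from F^(P x P). *)
Definition mx_close (F : realFieldType) (P : nat) (delta : F) (A B : 'M[F]_P) : Prop :=
  forall i j, `|A i j - B i j| < delta.

Definition continuous_on2 (F : realFieldType) (P : nat) (A : 'M[F]_P -> Prop)
    (d : 'M[F]_P -> 'M[F]_P -> F) : Prop :=
  forall S S', A S -> A S' -> forall eps : F, 0 < eps ->
    exists2 delta : F, 0 < delta &
      forall T T', A T -> A T' -> mx_close delta S T -> mx_close delta S' T' ->
        `|d S S' - d T T'| < eps.

Definition affine_invariant (F : realFieldType) (P : nat) (A : 'M[F]_P -> Prop)
    (d : 'M[F]_P -> 'M[F]_P -> F) : Prop :=
  forall (S S' W : 'M[F]_P), A S -> A S' -> W \in unitmx ->
    d (W^T *m S *m W) (W^T *m S' *m W) = d S S'.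

From HB Require Import structures.
From mathcomp Require Import all_boot all_order all_algebra.
From mathcomp Require Import ring lra.
Set Implicit Arguments. Unset Strict Implicit. Unset Printing Implicit Defensive.
Import Order.TTheory GRing.Theory Num.Theory.
Local Open Scope ring_scope.

(* Write E_ab for the matrix units and fix indices
   e < r <= f < P.  The base point is S = pid_mx r = diag(1,..,1,0,..,0),
   and for every parameter s we consider
       C(s) = S + s E_fe + s E_ef + s^2 E_ff.
   - C(1) is the congruence transform of S by the transvection 1 + E_ef,
     so C(1) lies in the set S+_{P,r} and differs from S.
   - The dilation D_t = diag(1,..,t,..,1) (t in position f) fixes S under
     congruence (row and column f of S vanish) and sends C(1) to C(t).
   Hence every C(t), t > 0, lies in the set and, by affine invariance,
   d(S, C(t)) = d(S, C(1)) > 0.  But C(t) -> S entrywise as t -> 0, and a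
   continuous metric satisfies d(S, T) -> d(S, S) = 0 as T -> S. *)

Section MatrixIdentities.
Variables (R : comUnitRingType) (n : nat).
Implicit Types (r : nat) (a b : 'I_n).

Lemma pid_diag r : pid_mx r = diag_mx (\row_(i < n) (i < r)%N%:R) :> 'M[R]_n.
Proof.
apply/matrixP=> i j; rewrite !mxE; case: (eqVneq i j) => [->|ij].
  by rewrite eqxx mulr1n.
by rewrite mulr0n val_eqE (negbTE ij).
Qed.

Lemma pid_mx_delta r a b :
  (pid_mx r : 'M[R]_n) *m delta_mx a b = (a < r)%:R *: delta_mx a b.
Proof.
rewrite pid_diag mul_diag_mx; apply/matrixP=> i j; rewrite !mxE.
by case: (eqVneq i a) => [->|_]; rewrite ?mulr0.
Qed.

Lemma delta_mx_pid r a b :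
  delta_mx a b *m (pid_mx r : 'M[R]_n) = (b < r)%:R *: delta_mx a b.
Proof.
rewrite pid_diag mul_mx_diag; apply/matrixP=> i j; rewrite !mxE mulrC.
by case: (eqVneq j b) => [->|_]; rewrite ?andbF ?mulr0.
Qed.

(* A transvection 1 + E_ab (a != b) is invertible, with inverse 1 - E_ab. *)
Lemma transvection_unit a b : a != b -> (1%:M + delta_mx a b : 'M[R]_n) \in unitmx.
Proof.
move=> ab; suff /mulmx1_unit[] : (1%:M + delta_mx a b) *m
    (1%:M - delta_mx a b) = 1%:M :> 'M[R]_n by [].
by rewrite mulmxDl !mulmxBr !mul1mx mulmx1 mul_delta_mx_0 1?eq_sym // subr0 subrK.
Qed.

Lemma diag_congr (s : 'rV[R]_n) (X : 'M[R]_n) :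
  (diag_mx s)^T *m X *m diag_mx s = \matrix_(i, j) (s 0 i * X i j * s 0 j).
Proof.
by rewrite tr_diag_mx mul_diag_mx mul_mx_diag; apply/matrixP=> i j; rewrite !mxE.
Qed.

Lemma diag_congr_delta (s : 'rV[R]_n) a b :
  (diag_mx s)^T *m delta_mx a b *m diag_mx s = (s 0 a * s 0 b) *: delta_mx a b.
Proof.
rewrite diag_congr; apply/matrixP=> i j; rewrite !mxE.
by case: (eqVneq i a) => [->|_]; case: (eqVneq j b) => [->|_];
  rewrite /= ?mulr1 ?mulr0 ?mul0r // mulrC.
Qed.

Definition dilation (t : R) (f : 'I_n) : 'M[R]_n :=
  diag_mx (\row_i (if i == f then t else 1)).

Lemma dilation_unit (t : R) (f : 'I_n) :
  t \is a GRing.unit -> dilation t f \in unitmx.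
Proof.
move=> ut; suff /mulmx1_unit[] : dilation t f *m dilation t^-1 f = 1%:M by [].
rewrite mulmx_diag -diag_const_mx; congr diag_mx; apply/rowP=> i; rewrite !mxE.
by case: (i == f); rewrite ?mulrV ?mulr1.
Qed.

Lemma dilation_congr_pid r (t : R) (f : 'I_n) : (r <= f)%N ->
  (dilation t f)^T *m pid_mx r *m dilation t f = pid_mx r.
Proof.
move=> rf; rewrite pid_diag tr_diag_mx !mulmx_diag; congr diag_mx.
apply/rowP=> i; rewrite !mxE; case: (eqVneq i f) => [->|_].
  by rewrite ltnNge rf mulr0 mul0r.
by rewrite mul1r mulr1.
Qed.

Definition curve r (e f : 'I_n) (s : R) : 'M[R]_n :=
  pid_mx r + s *: delta_mx f e + s *: delta_mx e f + s ^+ 2 *: delta_mx f f.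

Lemma transvection_congr_pid r (e f : 'I_n) : (e < r)%N -> (r <= f)%N ->
  (1%:M + delta_mx e f)^T *m pid_mx r *m (1%:M + delta_mx e f) = curve r e f 1.
Proof.
move=> er rf; rewrite /curve expr1n !scale1r [(1%:M + _)^T]linearD /= trmx1 trmx_delta.
rewrite mulmxDl mul1mx delta_mx_pid er scale1r mulmxDr mulmx1 mulmxDl.
by rewrite pid_mx_delta er scale1r mul_delta_mx addrA.
Qed.

Lemma dilation_congr_curve r (e f : 'I_n) (t : R) : e != f -> (r <= f)%N ->
  (dilation t f)^T *m curve r e f 1 *m dilation t f = curve r e f t.
Proof.
move=> ef rf; rewrite /curve !mulmxDr !mulmxDl dilation_congr_pid //.
rewrite -!scalemxAr -!scalemxAl !diag_congr_delta !mxE eqxx (negbTE ef).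
by rewrite !scalerA expr1n !mul1r mulr1 expr2.
Qed.

End MatrixIdentities.

Lemma psd_rank_congr (F : realFieldType) (n r : nat) (X W : 'M[F]_n) :
  psd_rank r X -> W \in unitmx -> psd_rank r (W^T *m X *m W).
Proof.
move=> [sX [pX rX]] uW; split; [|split].
- by rewrite !trmx_mul trmxK sX mulmxA.
- by move=> v; have := pX (v *m W^T); rewrite trmx_mul trmxK !mulmxA.
- rewrite mxrankMfree ?row_free_unit // -mxrank_tr trmx_mul trmxK.
  by rewrite mxrankMfree ?row_free_unit ?unitmx_tr // mxrank_tr.
Qed.

(* pid_mx r is psd of rank r: v S v^T = (v S)(v S)^T is a sum of squares. *)
Lemma psd_rank_pid (F : realFieldType) (n r : nat) :
  (r <= n)%N -> psd_rank r (pid_mx r : 'M[F]_n).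
Proof.
move=> rn; split; [exact: tr_pid_mx|split; last by rewrite rank_pid_mx].
move=> v; pose S : 'M[F]_n := pid_mx r.
have -> : v *m S *m v^T = (v *m S) *m (v *m S)^T.
  by rewrite trmx_mul tr_pid_mx mulmxA -[v *m _ *m pid_mx r](mulmxA v) pid_mx_id.
by rewrite mxE; apply: sumr_ge0 => k _; rewrite [X in _ * X]mxE -expr2 sqr_ge0.
Qed.

Lemma curve_close (F : realFieldType) (n r : nat) (e f : 'I_n) (t delta : F) :
  0 <= t <= 1 -> 3 * t < delta -> mx_close delta (pid_mx r) (curve r e f t).
Proof.
move=> /andP[t0 t1] tdelta i j; rewrite /curve !mxE.
have unit01 (b : bool) : 0 <= (b%:R : F) <= 1 by case: b; rewrite /= ?lexx ?ler01.
have small (p x y z : F) : 0 <= x <= 1 -> 0 <= y <= 1 -> 0 <= z <= 1 ->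
    `|p - (p + t * x + t * y + t ^+ 2 * z)| < delta.
  move=> /andP[x0 x1] /andP[y0 y1] /andP[z0 z1].
  rewrite (_ : p - _ = - (t * x + t * y + t ^+ 2 * z)); last by ring.
  by rewrite normrN ger0_norm expr2; nra.
exact: small.
Qed.

Lemma metric_near_diag (F : realFieldType) (n : nat) (A : 'M[F]_n -> Prop)
    (d : 'M[F]_n -> 'M[F]_n -> F) (S : 'M[F]_n) (eps : F) :
  is_metric_on A d -> continuous_on2 A d -> A S -> 0 < eps ->
  exists2 delta : F, 0 < delta &
    forall T, A T -> mx_close delta S T -> d S T < eps.
Proof.
move=> [d_ge0 [d_eq0 _]] d_cont AS eps0.
have [delta delta0 near] := d_cont S S AS AS eps eps0.
exists delta => // T AT closeT.
have close0 : mx_close delta S S by move=> i j; rewrite subrr normr0.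
have := near S T AS AT close0 closeT.
by rewrite (proj2 (d_eq0 S S AS AS) erefl) sub0r normrN ger0_norm ?d_ge0.
Qed.

Section InvariantCurve.
Variables (F : realFieldType) (n r : nat) (e f : 'I_n).
Hypotheses (er : (e < r)%N) (rf : (r <= f)%N).

Let ef : e != f.
Proof. by apply/eqP=> ef; move: er; rewrite ef ltnNge rf. Qed.

Let pidA : psd_rank r (pid_mx r : 'M[F]_n).
Proof. exact/psd_rank_pid/(leq_trans rf)/ltnW. Qed.

Lemma psd_rank_curve (t : F) : 0 < t -> psd_rank r (curve r e f t).
Proof.
move=> t0; rewrite -dilation_congr_curve // -transvection_congr_pid //.
apply: psd_rank_congr; last exact/dilation_unit/unitf_gt0.
by apply: psd_rank_congr pidA _; apply: transvection_unit.
Qed.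

(* The (f, e) entry of C(1) is 1, that of pid_mx r is 0. *)
Lemma curve_neq_pid : curve r e f 1 != pid_mx r :> 'M[F]_n.
Proof.
apply/eqP=> /matrixP/(_ f e); rewrite !mxE ltnNge rf andbF eq_sym (negbTE ef).
by rewrite !eqxx /= expr1n !mul1r !addr0 add0r => /eqP; rewrite oner_eq0.
Qed.

Lemma invariant_dist_curve (d : 'M[F]_n -> 'M[F]_n -> F) (t : F) :
  affine_invariant (psd_rank r) d -> 0 < t ->
  d (pid_mx r) (curve r e f t) = d (pid_mx r) (curve r e f 1).
Proof.
move=> d_aff t0; rewrite -dilation_congr_curve //.
rewrite -{1}(dilation_congr_pid t rf) d_aff ?dilation_unit ?unitf_gt0 //.
exact: psd_rank_curve.
Qed.

End InvariantCurve.

Theorem mainTheorem4 (F : realFieldType) (P r : nat) :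
  (1 <= r)%N -> (r < P)%N ->
  ~ exists d : 'M[F]_P -> 'M[F]_P -> F,
      [/\ is_metric_on (@psd_rank F P r) d,
          continuous_on2 (@psd_rank F P r) d &
          affine_invariant (@psd_rank F P r) d].
Proof.
move=> r1 rP [d [d_metric d_cont d_aff]].
pose e : 'I_P := Ordinal (leq_ltn_trans (leq0n r) rP).
pose f : 'I_P := Ordinal rP.
have er : (e < r)%N by [].
have rf : (r <= f)%N by [].
have pidA : psd_rank r (pid_mx r : 'M[F]_P) by apply/psd_rank_pid/ltnW.
have gap : 0 < d (pid_mx r) (curve r e f 1).
  have [d_ge0 [d_eq0 _]] := d_metric; have C1A := psd_rank_curve er rf (@ltr01 F).
  rewrite lt0r d_ge0 // andbT; apply/eqP=> /(d_eq0 _ _ pidA C1A) eq_pid.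
  by move: (curve_neq_pid F er rf); rewrite eq_pid eqxx.
have [delta delta0 near] := metric_near_diag d_metric d_cont pidA gap.
pose t := delta / (delta + 4).
have tE : t * (delta + 4) = delta by rewrite /t mulfVK // gt_eqF // ltr_wpDl // ltW.
have t0 : 0 < t by rewrite divr_gt0 // ltr_wpDl // ltW.
have t01 : 0 <= t <= 1 by rewrite ltW //=; nra.
have t_delta : 3 * t < delta by nra.
have := near _ (psd_rank_curve er rf t0) (curve_close r e f t01 t_delta).
by rewrite invariant_dist_curve // ltxx.
Qed.
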